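(* For every $\varepsilon,\delta\in(0,1)$ there exists an orchestration problem $P_{\varepsilon,\delta}$ (with at least two agents of different long-running correctness) such that, if $A_{\mathrm{rand}}$ denotes an agent of $P_{\varepsilon,\delta}$ chosen uniformly at random, then with probability at least $1-\delta$, $$\frac{\mathsf{C}_{\max}}{\mathsf{C}(A_{\mathrm{rand}})}\;\geq\;\min_{k,h\colon \mathsf{C}(A_k)\neq \mathsf{C}(A_h)} d(A_k,A_h)\;\geq\;\frac{1}{1-\varepsilon}.$$ In particular, these problems satisfy, for each fixed $\varepsilon\in(0,1)$, $$\lim_{\delta\to 0}\frac{\mathsf{C}_{\max}}{\mathsf{C}_{\mathrm{rand}}}\;\geq\;\frac{1}{1-\varepsilon},$$ where $\mathsf{C}_{\max}$ and $\mathsf{C}_{\mathrm{rand}}$ are computed for $P_{\varepsilon,\delta}$.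
   Context: An orchestration problem consists of finitely many mutually exclusive regions $\mathcal{R}_1,\dots,\mathcal{R}_M$ partitioning the input distribution, with region probabilities $\mathbb{P}(\mathcal{R}_m)\ge 0$ summing to $1$, and a finite set of agents $A_1,\dots,A_K$, each with a probability of correctness $\mathbb{P}(A_k\mid\mathcal{R}_m)\in(0,1]$ in each region (all assumed non-zero). The long-running correctness of agent $A_k$ is $\mathsf{C}(A_k)=\sum_{m=1}^M \mathbb{P}(\mathcal{R}_m)\,\mathbb{P}(A_k\mid\mathcal{R}_m)$. The theoretical maximum correctness is $\mathsf{C}_{\max}=\sum_{m=1}^M \mathbb{P}(\mathcal{R}_m)\max_k \mathbb{P}(A_k\mid\mathcal{R}_m)$ (achieved by picking, in each region, the most correct agent). If $A_{\mathrm{rand}}$ is an agent chosen uniformly at random from $\{A_1,\dots,A_K\}$, then $\mathsf{C}(A_{\mathrm{rand}})$ is a random variable and $\mathsf{C}_{\mathrm{rand}}=\mathbb{E}[\mathsf{C}(A_{\mathrm{rand}})]$. The dissimilarity of two agents is $d(A_k,A_h)=\max_m \exp\left|\log\frac{\mathbb{P}(A_k\mid\mathcal{R}_m)}{\mathbb{P}(A_h\mid\mathcal{R}_m)}\right|$. *)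

From HB Require Import structures.
From mathcomp Require Import all_boot all_order all_algebra.
From mathcomp Require Import reals sequences exp.
Set Implicit Arguments. Unset Strict Implicit. Unset Printing Implicit Defensive.
Import Order.TTheory GRing.Theory Num.Theory.
Local Open Scope ring_scope.

(* An orchestration problem: M mutually exclusive regions with probabilities
   pR (nonnegative, summing to 1) and K agents with correctness probabilities
   pA k m in (0,1]. *)
Record orch (R : realType) := Orch {
  nM : nat;
  nK : nat;
  pR : 'I_nM -> R;
  pA : 'I_nK -> 'I_nM -> R;
  pR_ge0 : forall m, 0 <= pR m;
  pR_sum1 : \sum_(m < nM) pR m = 1;
  pA_pos : forall k m, 0 < pA k m;
  pA_le1 : forall k m, pA k m <= 1
}.
Arguments nM {R} _.
Arguments nK {R} _.
Arguments pR {R} _ _.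
Arguments pA {R} _ _ _.

Section Defs.
Variable R : realType.
Variable P : orch R.

Definition Corr (k : 'I_(nK P)) : R := \sum_(m < nM P) pR P m * pA P k m.

(* C_max = sum_m P(R_m) max_k P(A_k | R_m)  (values are > 0, so 0 is a
   neutral start for the max when K >= 1) *)
Definition Cmax : R :=
  \sum_(m < nM P) pR P m * \big[Num.max/0]_(k < nK P) pA P k m.

Definition Crand : R := (\sum_(k < nK P) Corr k) / (nK P)%:R.

Definition prob_rand (E : pred 'I_(nK P)) : R :=
  #|[set k | E k]|%:R / (nK P)%:R.

Definition dissim (k h : 'I_(nK P)) : R :=
  \big[Num.max/0]_(m < nM P) expR `|ln (pA P k m / pA P h m)|.

Definition dissim_list : seq R :=
  [seq dissim kh.1 kh.2 | kh <- enum [pred kh : 'I_(nK P) * 'I_(nK P) |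
                                       Corr kh.1 != Corr kh.2]].

(* min_{k,h : C(A_k) <> C(A_h)} d(A_k,A_h); it is the true minimum whenever
   the list is nonempty (the start value is one of its elements). *)
Definition min_dissim : R :=
  \big[Num.min/head 0 dissim_list]_(x <- dissim_list) x.

End Defs.
Arguments Corr {R} P k.
Arguments Cmax {R} P.
Arguments Crand {R} P.
Arguments prob_rand {R} P E.
Arguments dissim {R} P k h.
Arguments dissim_list {R} P.
Arguments min_dissim {R} P.

From HB Require Import structures.
From mathcomp Require Import all_boot all_order all_algebra.
From mathcomp Require Import reals sequences exp.
From mathcomp Require Import lra.
Set Implicit Arguments. Unset Strict Implicit. Unset Printing Implicit Defensive.
Import Order.TTheory GRing.Theory Num.Theory.
Local Open Scope ring_scope.

(* A single region and N+1 agents: one agent is always correct, the other N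
   are correct with probability c = (1-eps)^2.  Every pair with different
   correctness has dissimilarity 1/c >= 1/(1-eps), and for each of the N
   imperfect agents C_max / C(A_k) = 1/c; choosing N >= 1/delta makes such an
   agent drawn with probability N/(N+1) >= 1-delta.  Finally
   C_max / C_rand = (N+1)/(1+cN) >= 1/(1-eps) as soon as N >= 1/(1-eps), so
   squaring 1-eps removes the need for any slack in the limit. *)

Lemma expR_abs_ln (R : realType) (x : R) : 0 < x -> expR `|ln x| = Num.max x x^-1.
Proof.
move=> x_gt0; have [x_ge1|x_lt1] := lerP 1 x.
- rewrite ger0_norm ?lnK ?posrE ?(ln_ge0 x_ge1) //; apply/esym/max_idPl.
  by rewrite (le_trans _ x_ge1) // invf_le1.
- rewrite ltr0_norm ?ln_lt0 ?x_gt0 ?x_lt1 // -lnV ?posrE // lnK ?posrE ?invr_gt0 //.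
  by apply/esym/max_idPr; apply: le_trans (ltW x_lt1) _; rewrite invf_ge1 // ltW.
Qed.

Lemma bigmin_head_const (R : realDomainType) (s : seq R) (x : R) :
  s != [::] -> {in s, forall y, y = x} -> \big[Num.min/head 0 s]_(y <- s) y = x.
Proof.
case: s => [//|y s] _ s_x; rewrite big_seq.
by elim/big_ind: _ => [|a b -> ->|]; [apply: s_x; rewrite mem_head|rewrite minxx|].
Qed.

Lemma prob_rand_ge_card (R : realType) (P : orch R) (E : pred 'I_(nK P))
    (A : {set 'I_(nK P)}) :
  {in A, forall k, E k} -> #|A|%:R / (nK P)%:R <= prob_rand P E.
Proof.
move=> AE; apply: ler_wpM2r; first by rewrite invr_ge0.
by rewrite ler_nat; apply/subset_leq_card/subsetP => k /AE; rewrite inE.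
Qed.

Lemma subr_le_divSn (R : realFieldType) (delta : R) (n : nat) :
  0 < delta -> delta^-1 <= n%:R -> 1 - delta <= n%:R / n.+1%:R.
Proof.
move=> delta_gt0 n_ge; rewrite ler_pdivlMr ?ltr0Sn // -natr1.
have: 1 <= delta * n%:R by rewrite -ler_pdivrMl // mulr1.
lra.
Qed.

Lemma invf_le_divSn_sqr (R : realFieldType) (e : R) (n : nat) :
  0 < e <= 1 -> e^-1 <= n%:R -> e^-1 <= n.+1%:R / (1 + e ^+ 2 * n%:R).
Proof.
move=> /andP[e_gt0 e_le1] n_ge.
have ne_ge1 : 1 <= e * n%:R by rewrite -ler_pdivrMl // mulr1.
have den_gt0 : 0 < 1 + e ^+ 2 * n%:R.
  by rewrite (lt_le_trans ltr01) // lerDl mulr_ge0 ?sqr_ge0.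
rewrite ler_pdivlMr // -natr1 ler_pdivrMl // expr2.
have: 0 <= (1 - e) * (e * n%:R - 1) by rewrite mulr_ge0 // subr_ge0.
nra.
Qed.

Section LeaderProblem.
Variable R : realType.

(* Makes the construction total in [c]. *)
Definition unit_clamp (c : R) : R := if 0 < c < 1 then c else 2^-1.

Lemma unit_clamp_gt0 c : 0 < unit_clamp c.
Proof. by rewrite /unit_clamp; case: ifP => [/andP[]|]; rewrite ?invr_gt0. Qed.

Lemma unit_clamp_lt1 c : unit_clamp c < 1.
Proof. by rewrite /unit_clamp; case: ifP => [/andP[]|] //; rewrite invf_lt1 ?ltr1n. Qed.

Definition leader_pA (c : R) (N : nat) (k : 'I_N.+1) (m : 'I_1) : R :=
  if k == ord0 then 1 else unit_clamp c.

Lemma leader_pA_gt0 c N (k : 'I_N.+1) m : 0 < leader_pA c k m.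
Proof. by rewrite /leader_pA; case: ifP => // _; apply: unit_clamp_gt0. Qed.

Lemma leader_pA_le1 c N (k : 'I_N.+1) m : leader_pA c k m <= 1.
Proof. by rewrite /leader_pA; case: ifP => // _; apply/ltW/unit_clamp_lt1. Qed.

Definition leader_orch (c : R) (N : nat) : orch R :=
  Orch (fun=> ler01) (big_ord1 _ _) (@leader_pA_gt0 c N) (@leader_pA_le1 c N).

Variables (c : R) (N : nat).
Hypotheses (c_gt0 : 0 < c) (c_lt1 : c < 1).
Let P := leader_orch c N.

Lemma leader_pAE k m : pA P k m = if k == ord0 then 1 else c.
Proof. by rewrite /= /leader_pA /unit_clamp c_gt0 c_lt1. Qed.

Lemma leader_CorrE k : Corr P k = if k == ord0 then 1 else c.
Proof. by rewrite /Corr big_ord1 mul1r leader_pAE. Qed.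

Lemma leader_CmaxE : Cmax P = 1.
Proof.
rewrite /Cmax big_ord1 mul1r /= big_ord_recl /leader_pA eqxx.
apply/max_idPl; elim/big_ind: _ => // [a b a_le1 b_le1|i _].
  by rewrite ge_max a_le1 b_le1.
exact/ltW/unit_clamp_lt1.
Qed.

Lemma leader_CrandE : Crand P = (1 + c *+ N) / N.+1%:R.
Proof.
rewrite /Crand big_ord_recl leader_CorrE eqxx.
by under eq_bigr do rewrite leader_CorrE /=; rewrite sumr_const card_ord.
Qed.

Lemma leader_dissimE k h : Corr P k != Corr P h -> dissim P k h = c^-1.
Proof.
have c_le_cV : c <= c^-1 by rewrite (le_trans (ltW c_lt1)) // invf_ge1 ?ltW.
rewrite /dissim big_ord_recl big_ord0 maxC (max_idPr (expR_ge0 _)).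
rewrite !leader_pAE !leader_CorrE.
case: (eqVneq k ord0) => _; case: (eqVneq h ord0) => _; rewrite ?eqxx // => _.
- by rewrite expR_abs_ln ?divr_gt0 // div1r invrK; apply/max_idPl.
- by rewrite expR_abs_ln ?divr_gt0 // divr1; apply/max_idPr.
Qed.

Lemma leader_Corr_neq : (0 < N)%N -> Corr P ord0 != Corr P ord_max.
Proof.
move=> N_gt0; have max_ne0 : ord_max != ord0 :> 'I_N.+1 by rewrite -val_eqE /= -lt0n.
by rewrite !leader_CorrE eqxx (negPf max_ne0) eq_sym lt_eqF.
Qed.

Lemma leader_min_dissimE : (0 < N)%N -> min_dissim P = c^-1.
Proof.
move=> N_gt0; apply: bigmin_head_const.
  rewrite -size_eq0 size_map -cardE -lt0n; apply/card_gt0P.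
  by exists (ord0, ord_max); rewrite inE leader_Corr_neq.
by move=> x /mapP[[k h]]; rewrite mem_enum inE /= => /leader_dissimE <- ->.
Qed.

Lemma leader_prob_rand_ge (E : pred 'I_(nK P)) :
  (forall k, k != ord0 -> E k) -> N%:R / N.+1%:R <= prob_rand P E.
Proof.
move=> E_ok; have := @prob_rand_ge_card _ P E [set~ ord0].
rewrite cardsC1 card_ord; apply=> k; rewrite !inE; exact: E_ok.
Qed.

End LeaderProblem.

Lemma sqr_in_unit (R : realDomainType) (e : R) :
  0 < e < 1 -> [/\ 0 < e ^+ 2, e ^+ 2 < 1 & e ^+ 2 <= e].
Proof. by case/andP=> e_gt0 e_lt1; rewrite expr2; split; nra. Qed.

Lemma truncnDS_gt (R : archiRealDomainType) (x y : R) :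
  x < (Num.truncn x + Num.truncn y).+1%:R /\ y < (Num.truncn x + Num.truncn y).+1%:R.
Proof.
by split; [apply: lt_le_trans (truncnS_gt x) _|apply: lt_le_trans (truncnS_gt y) _];
  rewrite ler_nat ltnS ?leq_addr ?leq_addl.
Qed.

Definition hard_orch (R : realType) (eps delta : R) : orch R :=
  leader_orch ((1 - eps) ^+ 2) (Num.truncn delta^-1 + Num.truncn (1 - eps)^-1).+1.

Theorem theorem1 (R : realType) :
  exists Pfam : R -> R -> orch R,
    (forall eps delta : R, 0 < eps < 1 -> 0 < delta < 1 ->
       let P := Pfam eps delta in
       (exists k h : 'I_(nK P), Corr P k != Corr P h) /\
       1 - delta <= prob_rand P
         (fun k => (min_dissim P <= Cmax P / Corr P k) &&
                   ((1 - eps)^-1 <= min_dissim P)))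
    /\
    (forall eps : R, 0 < eps < 1 ->
       (* liminf_{delta -> 0+} C_max / C_rand >= 1/(1-eps) *)
       forall eta : R, 0 < eta ->
       exists delta0 : R, 0 < delta0 /\
         forall delta : R, 0 < delta -> delta < delta0 -> delta < 1 ->
           (1 - eps)^-1 - eta <= Cmax (Pfam eps delta) / Crand (Pfam eps delta)).
Proof.
have compl_unit (eps : R) : 0 < eps < 1 -> 0 < 1 - eps < 1.
  by case/andP=> ? ?; apply/andP; split; lra.
exists (@hard_orch R); split=> [eps delta eps01 /andP[delta_gt0 _] P|eps eps01 eta eta_gt0].
- have /andP[e_gt0 _] := compl_unit _ eps01.
  have [c_gt0 c_lt1 c_le_e] := sqr_in_unit (compl_unit _ eps01).
  have [N_gt_deltaV _] := truncnDS_gt delta^-1 (1 - eps)^-1.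
  rewrite {}/P /hard_orch; split; first by exists ord0, ord_max; apply: leader_Corr_neq.
  apply: le_trans (subr_le_divSn delta_gt0 (ltW N_gt_deltaV)) (leader_prob_rand_ge _) => k.
  rewrite leader_min_dissimE // leader_CmaxE leader_CorrE // => /negPf ->.
  by rewrite div1r lexx lef_pV2 ?posrE.
- exists 1; split=> // delta delta_gt0 _ _.
  have /andP[e_gt0 e_lt1] := compl_unit _ eps01.
  have [c_gt0 c_lt1 _] := sqr_in_unit (compl_unit _ eps01).
  have [_ N_gt_eV] := truncnDS_gt delta^-1 (1 - eps)^-1.
  rewrite leader_CmaxE leader_CrandE // div1r invf_div -[_ ^+ 2 *+ _]mulr_natr.
  apply: le_trans (invf_le_divSn_sqr _ (ltW N_gt_eV)); first lra.
  by rewrite e_gt0 ltW.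
Qed.
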